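(* Let $V:\mathbb{R}^d\to\mathbb{R}$ be $\mathtt{m}$-convex ($\mathtt{m}\ge0$) and continuously differentiable, with $\|\nabla V(x)-\nabla V(y)\|\le M\|x-y\|$ for all $x,y$, where $M>0$. Assume there exists $x^*\in\arg\min_{\mathbb{R}^d}V$. Then for any $\bar\gamma<2/(M+\mathtt{m})$, $\gamma\in(0,\bar\gamma]$ and $x\in\mathbb{R}^d$, $$\|x-\gamma\nabla V(x)\|^2\le(1-\gamma\varpi)\|x\|^2+\gamma\{(2/(\mathtt{m}+M)-\bar\gamma)^{-1}+4\varpi\}\|x^*\|^2,$$ with $\varpi=\mathtt{m}M/(\mathtt{m}+M)$.
   Context: $V$ is $\mathtt{m}$-convex if $V(tx+(1-t)y)\le tV(x)+(1-t)V(y)-(\mathtt{m}/2)t(1-t)\|x-y\|^2$ for all $x,y\in\mathbb{R}^d$, $t\in[0,1]$; $\|\cdot\|$ Euclidean. *)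

From HB Require Import structures.
From mathcomp Require Import all_boot all_order all_algebra.
From mathcomp Require Import all_classical all_reals all_analysis.
Set Implicit Arguments. Unset Strict Implicit. Unset Printing Implicit Defensive.
Import Order.TTheory GRing.Theory Num.Theory.
Import numFieldNormedType.Exports.
Local Open Scope ring_scope.

(* Euclidean inner product and norm on R^d (the library norm on 'rV is the sup norm). *)
Definition dotv {R : realType} {d : nat} (u v : 'rV[R]_d) : R :=
  \sum_(i < d) u 0 i * v 0 i.
Definition enorm {R : realType} {d : nat} (u : 'rV[R]_d) : R :=
  Num.sqrt (dotv u u).

Definition mconvex {R : realType} {d : nat} (m : R) (V : 'rV[R]_d -> R) : Prop :=
  forall (x y : 'rV[R]_d) (t : R), 0 <= t <= 1 ->
    V (t *: x + (1 - t) *: y) <=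
      t * V x + (1 - t) * V y - (m / 2) * t * (1 - t) * enorm (x - y) ^+ 2.

Definition is_gradient {R : realType} {d : nat} (V : 'rV[R]_d -> R)
  (g : 'rV[R]_d -> 'rV[R]_d) : Prop :=
  forall x, differentiable V x /\ forall h, 'd V x h = dotv (g x) h.

From HB Require Import structures.
From mathcomp Require Import all_boot all_order all_algebra.
From mathcomp Require Import all_classical all_reals all_analysis.
From mathcomp Require Import ring lra.
Import Order.TTheory GRing.Theory Num.Theory.
Import numFieldNormedType.Exports.
Local Open Scope classical_set_scope.
Local Open Scope ring_scope.

(* Summing the quadratic lower bound given by m-convexity and the upper bound of the
   descent lemma at suitably shifted points shows that the gradient is cocoercive:
   |g x - g y|^2 + m M |x - y|^2 <= (m + M) <g x - g y, x - y>.
   At the minimiser x* the gradient vanishes, so this controls <g x, x - x*> in the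
   expansion of |x - gamma g x|^2; the cross term <g x, x*> is absorbed by Young's
   inequality with weight 2/(m + M) - gamma, whence the factor (2/(m + M) - gbar)^-1. *)

Section Euclidean.
Context {R : realType} {d : nat}.
Implicit Types u v w : 'rV[R]_d.

Lemma dotvC u v : dotv u v = dotv v u.
Proof. by apply: eq_bigr => i _; rewrite mulrC. Qed.

Lemma dotvDl u w v : dotv (u + w) v = dotv u v + dotv w v.
Proof. by rewrite /dotv -big_split; apply: eq_bigr => i _; rewrite mxE mulrDl. Qed.

Lemma dotvZl a u v : dotv (a *: u) v = a * dotv u v.
Proof. by rewrite /dotv mulr_sumr; apply: eq_bigr => i _; rewrite mxE mulrA. Qed.

Lemma dotvNl u v : dotv (- u) v = - dotv u v.
Proof. by rewrite -scaleN1r dotvZl mulN1r. Qed.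

Lemma dotvBl u w v : dotv (u - w) v = dotv u v - dotv w v.
Proof. by rewrite dotvDl dotvNl. Qed.

Lemma dotvDr u w v : dotv v (u + w) = dotv v u + dotv v w.
Proof. by rewrite dotvC dotvDl !(dotvC v). Qed.

Lemma dotvZr a u v : dotv v (a *: u) = a * dotv v u.
Proof. by rewrite dotvC dotvZl dotvC. Qed.

Lemma dotvNr u v : dotv v (- u) = - dotv v u.
Proof. by rewrite dotvC dotvNl dotvC. Qed.

Lemma dotvBr u w v : dotv v (u - w) = dotv v u - dotv v w.
Proof. by rewrite dotvDr dotvNr. Qed.

Lemma dotv0l v : dotv 0 v = 0.
Proof. by rewrite -(scale0r 0) dotvZl mul0r. Qed.

Lemma dotv_lincomb a b u v :
  dotv (a *: u + b *: v) (a *: u + b *: v) =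
  a ^+ 2 * dotv u u + 2 * a * b * dotv u v + b ^+ 2 * dotv v v.
Proof. by rewrite !dotvDl !dotvDr !dotvZl !dotvZr (dotvC v u); ring. Qed.

Lemma dotv_ge0 u : 0 <= dotv u u.
Proof. by apply: sumr_ge0 => i _; rewrite -expr2 sqr_ge0. Qed.

Lemma dotv_self_eq0 u : dotv u u = 0 -> u = 0.
Proof.
move=> /eqP; rewrite psumr_eq0 => [/allP u0|i _]; last by rewrite -expr2 sqr_ge0.
apply/matrixP => i j; rewrite ord1 mxE.
by have := u0 j (mem_index_enum j); rewrite /= -expr2 sqrf_eq0 => /eqP.
Qed.

Lemma sqr_enorm u : enorm u ^+ 2 = dotv u u.
Proof. by rewrite sqr_sqrtr // dotv_ge0. Qed.

Lemma enorm_ge0 u : 0 <= enorm u.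
Proof. exact: sqrtr_ge0. Qed.

Lemma enormZ a u : enorm (a *: u) = `|a| * enorm u.
Proof. by rewrite /enorm dotvZl dotvZr mulrA -expr2 sqrtrM ?sqr_ge0 // sqrtr_sqr. Qed.

Lemma dotv_le_enorm u v : dotv u v <= enorm u * enorm v.
Proof.
have [/dotv_self_eq0 ->|vv_neq0] := eqVneq (dotv v v) 0.
  by rewrite dotvC dotv0l mulr_ge0 ?enorm_ge0.
have vv_gt0 : 0 < dotv v v by rewrite lt_neqAle eq_sym vv_neq0 dotv_ge0.
have uv_sqr : dotv u v ^+ 2 <= dotv u u * dotv v v.
  have := dotv_ge0 (dotv v v *: u + (- dotv u v) *: v); rewrite dotv_lincomb.
  have -> : dotv v v ^+ 2 * dotv u u + 2 * dotv v v * - dotv u v * dotv u v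
      + (- dotv u v) ^+ 2 * dotv v v
      = dotv v v * (dotv u u * dotv v v - dotv u v ^+ 2) by ring.
  by rewrite pmulr_rge0 // subr_ge0.
rewrite (le_trans (ler_norm _)) // -sqrtr_sqr -sqrtrM ?dotv_ge0 //.
by rewrite ler_sqrt // mulr_ge0 // dotv_ge0.
Qed.

Lemma dotv_young a u v : 0 < a ->
  - (2 * dotv u v) <= a * dotv u u + a^-1 * dotv v v.
Proof.
move=> a_gt0; have := dotv_ge0 (a *: u + 1 *: v); rewrite dotv_lincomb => sq_ge0.
have -> : a * dotv u u + a^-1 * dotv v v
    = a^-1 * (a ^+ 2 * dotv u u + 2 * a * 1 * dotv u v + 1 ^+ 2 * dotv v v)
      - 2 * dotv u v by field; rewrite gt_eqF.
by rewrite lerBrDr addrC subrr mulr_ge0 // invr_ge0 ltW.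
Qed.

Lemma dotv_le_parallelogram u v :
  dotv u u <= 2 * dotv (u - v) (u - v) + 2 * dotv v v.
Proof.
have := dotv_ge0 (1 *: u + (-2) *: v).
have -> : u - v = 1 *: u + (-1) *: v by rewrite scale1r scaleN1r.
by rewrite !dotv_lincomb; lra.
Qed.

Lemma dotv_step_le (k w gamma c : R) (x v xs : 'rV[R]_d) :
  0 < gamma -> 0 <= w -> 0 < c -> c <= 2 / k - gamma ->
  dotv v v / k + w * dotv (x - xs) (x - xs) <= dotv v (x - xs) ->
  dotv (x - gamma *: v) (x - gamma *: v) <=
    (1 - gamma * w) * dotv x x + gamma * (c^-1 + 4 * w) * dotv xs xs.
Proof.
move=> gamma_gt0 w_ge0 c_gt0 c_le coco.
have a_gt0 : 0 < 2 / k - gamma by apply: lt_le_trans c_le.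
have young := dotv_young _ v xs a_gt0.
have par := dotv_le_parallelogram x xs.
have inv_le : (2 / k - gamma)^-1 <= c^-1 by rewrite lef_pV2 ?posrE.
have -> : x - gamma *: v = 1 *: x + (- gamma) *: v by rewrite scale1r scaleNr.
rewrite dotv_lincomb (dotvC x v).
have -> : dotv v x = dotv v (x - xs) + dotv v xs by rewrite dotvBr subrK.
have gamma_ge0 := ltW gamma_gt0; have xs_ge0 := dotv_ge0 xs.
have := ler_wpM2l gamma_ge0 coco; have := ler_wpM2l gamma_ge0 young.
have := ler_wpM2l (mulr_ge0 gamma_ge0 w_ge0) par.
have := ler_wpM2l (mulr_ge0 gamma_ge0 xs_ge0) inv_le.
have := mulr_ge0 (mulr_ge0 gamma_ge0 w_ge0) xs_ge0.
lra.
Qed.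

End Euclidean.

Lemma le_mulr_of_quadratic_bound {R : realFieldType} (k W P : R) : 0 <= k ->
  (forall s, (2 * s - k * s ^+ 2) * W <= P) -> W <= k * P.
Proof.
move=> k_ge0 bound; have [k_gt0|k_le0] := ltrP 0 k.
  have := bound k^-1.
  have -> : 2 * k^-1 - k * k^-1 ^+ 2 = k^-1 by field; rewrite gt_eqF.
  by rewrite ler_pdivrMl.
have k0 : k = 0 by apply/eqP; rewrite eq_le k_le0 k_ge0.
rewrite k0 in bound *; rewrite mul0r leNgt; apply/negP => W_gt0.
have := bound ((P + 1) / (2 * W)).
have -> : (2 * ((P + 1) / (2 * W)) - 0 * ((P + 1) / (2 * W)) ^+ 2) * W = P + 1.
  by field; rewrite gt_eqF.
lra.
Qed.

Lemma is_derive_quadratic {R : realType} (a b t : R) :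
  is_derive t 1 (fun s : R => a * s + b * s ^+ 2) (a + 2 * b * t).
Proof.
have -> : (fun s : R => a * s + b * s ^+ 2) = a \*: idfun + b \*: (idfun \* idfun).
  by apply/funext => s /=; rewrite expr2.
apply: is_derive_eq.
by rewrite /= -[a%:A]/(a * 1) -[t%:A]/(t * 1) /GRing.scale /=; ring.
Qed.

Section Gradient.
Context {R : realType} {d : nat} {V : 'rV[R]_d -> R} {g : 'rV[R]_d -> 'rV[R]_d}.
Hypothesis gradVg : is_gradient V g.

Lemma is_derive_along_line y v (t : R) :
  is_derive t 1 (fun s : R => V (s *: v + y)) (dotv (g (t *: v + y)) v).
Proof.
have [dV dVE] := gradVg (t *: v + y).
have quotE : (fun h : R => h^-1 *: (((fun s => V (s *: v + y)) \o shift t) (h *: 1)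
                                     - V (t *: v + y)))
    = (fun h : R => h^-1 *: ((V \o shift (t *: v + y)) (h *: v) - V (t *: v + y))).
  apply/funext => h /=; congr (_ *: (V _ - _)).
  by rewrite /shift /= -[h%:A]/(h * 1) mulr1 scalerDl addrA.
split; first by rewrite /derivable quotE; exact: diff_derivable.
by rewrite /derive quotE -/(derive V _ v) deriveE.
Qed.

Context {M : R}.
Hypothesis lipg : forall x y, enorm (g x - g y) <= M * enorm (x - y).

(* Mean value theorem applied to s |-> V (y + s (z - y)) minus its quadratic majorant. *)
Lemma descent_le y z :
  V z <= V y + dotv (g y) (z - y) + M / 2 * enorm (z - y) ^+ 2.
Proof.
set v := z - y; set c1 := dotv (g y) v; set n2 := dotv v v.
pose F s := V (s *: v + y) - (c1 * s + (M / 2 * n2) * s ^+ 2).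
have dF (t : R) : is_derive t 1 F (dotv (g (t *: v + y)) v - (c1 + 2 * (M / 2 * n2) * t)).
  exact: is_deriveB (is_derive_along_line y v t) (is_derive_quadratic _ _ t).
have [c c01 F10] := MVT ltr01 (fun t _ => dF t)
  (derivable_within_continuous (fun t _ => @ex_derive _ _ _ _ _ _ _ (dF t))).
have c_ge0 : 0 <= c by move: c01; rewrite in_itv /= => /andP[/ltW].
have slope_le : dotv (g (c *: v + y)) v - c1 <= M * c * n2.
  rewrite /c1 -dotvBl (le_trans (dotv_le_enorm _ _)) //.
  rewrite (le_trans (ler_wpM2r (enorm_ge0 _) (lipg _ _))) //.
  by rewrite addrK enormZ ger0_norm // /n2 -sqr_enorm expr2 !mulrA.
have : F 1 - F 0 <= 0 by rewrite F10 subr0 mulr1; lra.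
rewrite /F scale1r scale0r add0r /v subrK sqr_enorm -/v -/n2.
by rewrite expr1n expr0n /= !mulr0 !mulr1 addr0 subr0; lra.
Qed.

Lemma gradient_eq0_at_min xs : 0 < M -> (forall y, V xs <= V y) -> g xs = 0.
Proof.
move=> M_gt0 xs_min; have Minv_gt0 : 0 < M^-1 by rewrite invr_gt0.
apply: dotv_self_eq0; apply/eqP.
rewrite eq_le dotv_ge0 andbT -(pmulr_rle0 _ Minv_gt0).
have := le_trans (xs_min _) (descent_le xs (xs - M^-1 *: g xs)).
have -> : xs - M^-1 *: g xs - xs = - M^-1 *: g xs.
  by rewrite addrAC subrr add0r scaleNr.
rewrite sqr_enorm dotvZl !dotvZr.
set G := dotv (g xs) (g xs).
have -> : M / 2 * (- M^-1 * (- M^-1 * G)) = M^-1 * G / 2 by field; rewrite gt_eqF.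
lra.
Qed.

Context {m : R}.
Hypothesis convV : mconvex m V.

Lemma mconvex_ge y z :
  V y + dotv (g y) (z - y) + m / 2 * enorm (z - y) ^+ 2 <= V z.
Proof.
set v := z - y; have [dV dVE] := gradVg y.
pose q h := h^-1 *: ((V \o shift y) (h *: v) - V y).
have q_cvg : q @ 0^'+ --> dotv (g y) v.
  apply: cvg_dnbhs_at_right.
  by rewrite -dVE -deriveE //; exact: (diff_derivable (v := v) dV).
pose r h := (V z - V y - m / 2 * dotv v v) + (m / 2 * dotv v v) * h.
have r_cvg : r @ 0^'+ --> V z - V y - m / 2 * dotv v v.
  apply: cvg_at_right_filter.
  rewrite -[X in _ --> X]addr0 -[X in _ --> _ + X](mulr0 (m / 2 * dotv v v)).
  by apply: cvgD; [exact: cvg_cst | apply: cvgM; [exact: cvg_cst | exact: cvg_id]].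
suff : dotv (g y) v <= V z - V y - m / 2 * dotv v v by rewrite sqr_enorm; lra.
apply: (ler_cvg_to q_cvg r_cvg); near=> h.
have h_gt0 : 0 < h by near: h; exact: nbhs_right_gt.
have h_le1 : h <= 1 by near: h; apply: nbhs_right_le; exact: ltr01.
have := convV z y h; rewrite h_le1 ltW //= => /(_ isT).
have -> : h *: z + (1 - h) *: y = h *: v + y.
  by rewrite /v scalerBr scalerBl scale1r addrA addrAC.
rewrite sqr_enorm -/v => conv_h.
rewrite /q /r /= /shift /= ler_pdivrMl //.
have -> : h * (V z - V y - m / 2 * dotv v v + m / 2 * dotv v v * h) =
  (h * V z + (1 - h) * V y - m / 2 * h * (1 - h) * dotv v v) - V y by ring.
by rewrite lerD2r.
Unshelve. all: by end_near.
Qed.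

Lemma rV_eq0_of_mconvex_gt : M < m -> forall u : 'rV[R]_d, u = 0.
Proof.
move=> Mm u; have lo := mconvex_ge 0 u; have up := descent_le 0 u.
rewrite subr0 sqr_enorm in lo up.
apply: dotv_self_eq0; apply/eqP; rewrite eq_le dotv_ge0 andbT.
have : (m - M) * dotv u u <= 0 by lra.
by rewrite pmulr_rle0 // subr_gt0.
Qed.

(* [u] is the gradient increment of V - m |.|^2 / 2; sum the bounds of [mconvex_ge]
   and [descent_le] between x, y and the points y - s u, x + s u. *)
Lemma shifted_gradient_cocoercive x y (s : R) :
  (2 * s - (M - m) * s ^+ 2) *
    dotv (g y - g x - m *: (y - x)) (g y - g x - m *: (y - x))
  <= dotv (g y - g x - m *: (y - x)) (y - x).
Proof.
set D := y - x; set u := g y - g x - m *: D.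
have lo1 := mconvex_ge x (y - s *: u); have up1 := descent_le y (y - s *: u).
have lo2 := mconvex_ge y (x + s *: u); have up2 := descent_le x (x + s *: u).
have e1 : y - s *: u - x = D - s *: u by rewrite addrAC.
have e2 : y - s *: u - y = (- s) *: u by rewrite addrAC subrr add0r scaleNr.
have e3 : x + s *: u - y = s *: u - D by rewrite addrAC addrC /D opprB.
have e4 : x + s *: u - x = s *: u by rewrite addrAC subrr add0r.
have gyE : g y = g x + (u + m *: D) by rewrite /u subrK addrC subrK.
rewrite e1 in lo1; rewrite e2 gyE in up1; rewrite e3 gyE in lo2; rewrite e4 in up2.
clearbody u D.
rewrite !sqr_enorm !(dotvDl, dotvDr, dotvNl, dotvNr, dotvZl, dotvZr) in lo1 up1 lo2 up2.
rewrite ?(dotvC u D) ?(dotvC u (g x)) ?(dotvC D (g x)) in lo1 up1 lo2 up2 *.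
lra.
Qed.

Lemma gradient_cocoercive x y :
  dotv (g x - g y) (g x - g y) + m * M * dotv (x - y) (x - y)
  <= (m + M) * dotv (g x - g y) (x - y).
Proof.
have [Mm|mM] := ltrP M m.
  rewrite (rV_eq0_of_mconvex_gt Mm (g x - g y)) (rV_eq0_of_mconvex_gt Mm (x - y)).
  by rewrite !dotv0l !mulr0 addr0.
have Mm_ge0 : 0 <= M - m by rewrite subr_ge0.
have := le_mulr_of_quadratic_bound _ _ _ Mm_ge0 (shifted_gradient_cocoercive y x).
move: (g x - g y) (x - y) => G D.
rewrite !(dotvBl, dotvBr, dotvZl, dotvZr) (dotvC D G).
lra.
Qed.

End Gradient.

Theorem lemma12 (R : realType) (d : nat) (V : 'rV[R]_d -> R)
  (gradV : 'rV[R]_d -> 'rV[R]_d) (m M : R) :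
  0 <= m -> 0 < M ->
  mconvex m V ->
  is_gradient V gradV ->
  continuous gradV ->
  (forall x y, enorm (gradV x - gradV y) <= M * enorm (x - y)) ->
  forall xstar : 'rV[R]_d, (forall y, V xstar <= V y) ->
    forall (gbar gamma : R) (x : 'rV[R]_d),
      gbar < 2 / (M + m) -> 0 < gamma -> gamma <= gbar ->
      let varpi := m * M / (m + M) in
      enorm (x - gamma *: gradV x) ^+ 2 <=
        (1 - gamma * varpi) * enorm x ^+ 2
        + gamma * ((2 / (m + M) - gbar)^-1 + 4 * varpi) * enorm xstar ^+ 2.
Proof.
move=> m_ge0 M_gt0 convV gradVg _ lipg xs xs_min gbar gamma x gbar_lt gamma_gt0 gamma_le.
cbv zeta; set varpi := m * M / (m + M).
have mM_gt0 : 0 < m + M by rewrite ltr_wpDl.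
have gxs0 : gradV xs = 0 := gradient_eq0_at_min gradVg lipg _ M_gt0 xs_min.
have coco := gradient_cocoercive gradVg lipg convV x xs.
rewrite gxs0 subr0 in coco.
rewrite !sqr_enorm; apply: (dotv_step_le (m + M)) => //.
- by rewrite divr_ge0 ?mulr_ge0 // ltW.
- by rewrite subr_gt0 addrC.
- by rewrite lerB.
- set G := gradV x; set N := dotv (x - xs) (x - xs).
  have -> : dotv G G / (m + M) + varpi * N = (dotv G G + m * M * N) / (m + M).
    by rewrite /varpi; field; rewrite gt_eqF.
  by rewrite ler_pdivrMr // [_ * (m + M)]mulrC.
Qed.
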